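(* For any finite simple graph $G$, the quotient of the separated deleted join $\widetilde Z(G)$ of the flag complex $\overline G$ by its free involution $\iota$ equals $Z(G)$. Consequently $\widetilde Z(G)$ is a double cover of $Z(G)$.
   Context: $\overline G$ is the flag (clique) complex of $G$. $\widetilde Z(G)$ is the simplicial complex on $V(G) \times \{-1,+1\}$ whose faces are $(\sigma \times \{-1\}) \cup (\rho \times \{+1\})$ for (possibly empty) cliques $\sigma,\rho$ of $G$ that are disjoint and have no edge of $G$ between them; $\iota$ swaps $(v,-1)$ and $(v,+1)$, and the quotient is the simplicial complex on $V(G)$ whose faces are the images of faces of $\widetilde Z(G)$. $Z(G)$ is the simplicial complex on $V(G)$ with complete 1-skeleton, in which a triangle is a face if and only if an odd number of its edges lie in $G$, and a simplex of dimension at least $2$ is a face if and only if all its triangles are faces. *)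

From mathcomp Require Import all_boot.
Set Implicit Arguments. Unset Strict Implicit. Unset Printing Implicit Defensive.

(* A finite simple graph: vertex type T : finType, adjacency e : rel T,
   assumed symmetric and irreflexive (hypotheses of the theorem). *)

Section Defs.
Variables (T : finType) (e : rel T).

(* cliques of G = faces of the flag complex \overline G (empty allowed) *)
Definition clique (s : {set T}) : bool :=
  [forall x in s, forall y in s, (x != y) ==> e x y].

Definition no_edge_between (s r : {set T}) : bool :=
  [forall x in s, forall y in r, ~~ e x y].

(* vertices of \tilde Z(G): T * bool, with false = -1 and true = +1 *)
Definition tag_set (s : {set T}) (b : bool) : {set T * bool} :=
  setX s [set b].

Definition Ztilde_face (S : {set T * bool}) : Prop :=
  exists (sg rh : {set T}),
    [/\ clique sg, clique rh, [disjoint sg & rh], no_edge_between sg rh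
      & S = tag_set sg false :|: tag_set rh true].

Definition swap_sign (x : T * bool) : T * bool := (x.1, ~~ x.2).
Definition swap_set (S : {set T * bool}) : {set T * bool} := swap_sign @: S.

Definition proj_set (S : {set T * bool}) : {set T} := fst @: S.

Definition quotient_face (t : {set T}) : Prop :=
  exists S, Ztilde_face S /\ t = proj_set S.

Definition is_edge (u : {set T}) : bool :=
  [exists x in u, exists y in u, (x != y) && e x y].

Definition odd_triangle (t : {set T}) : bool :=
  odd #|[set u in powerset t | (#|u| == 2) && is_edge u]|.

(* faces of Z(G): complete 1-skeleton; a triangle is a face iff it has an
   odd number of edges; a higher simplex is a face iff all its triangles are.
   Uniformly: every 3-subset of t is an odd triangle. *)
Definition Z_face (t : {set T}) : bool :=
  [forall u in powerset t, (#|u| == 3) ==> odd_triangle u].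

End Defs.

From mathcomp Require Import all_boot.
Set Implicit Arguments. Unset Strict Implicit. Unset Printing Implicit Defensive.

(** Two disjoint cliques sg, rh with no edge between them amount to a
    partition of t = sg :|: rh in which distinct vertices are adjacent iff
    they lie on the same side. Three vertices split over two sides have 1 or
    3 "same side" pairs, so every triangle of t is odd. Conversely, if every
    triangle of t is odd, then "equal or adjacent" is an equivalence on t
    with at most two classes: the closed neighbourhood of any v \in t and
    its complement. Hence the split of a nonempty t is unique up to swapping
    the sides, which is why S and swap_set S are the only faces of Ztilde
    over proj_set S. *)

Section Triples.
Variable A : finType.

Lemma card_setId_uniq (s : seq A) (P : pred A) :
  uniq s -> #|[set u in s | P u]| = count P s.
Proof.
move/(filter_uniq P)/card_uniqP; rewrite size_filter => <-.
by apply: eq_card => u; rewrite inE mem_filter andbC.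
Qed.

Lemma cards3P (U : {set A}) :
  reflect (exists a b c, [/\ a != b, a != c, b != c & U = [set a; b; c]])
          (#|U| == 3).
Proof.
apply: (iffP eqP) => [U3 | [a [b [c [nab nac nbc ->]]]]]; last first.
  by rewrite -setUA cardsU1 cards2 nbc !inE negb_or nab nac.
have [a aU] : {a | a \in U} by apply/sigW/set0Pn; rewrite -card_gt0 U3.
move: U3; rewrite (cardsD1 a) aU => -[/eqP/cards2P [b [c [nbc Ua]]]].
have : (b \in U :\ a) && (c \in U :\ a) by rewrite Ua !inE !eqxx orbT.
rewrite !inE => /andP [/andP [nba _] /andP [nca _]].
exists a, b, c; split; rewrite ?(eq_sym a) //.
by rewrite -{1}(setD1K aU) Ua setUA.
Qed.

Lemma pairs_of_triple (a b c : A) : a != b -> a != c -> b != c ->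
  forall U : {set A}, (U \subset [set a; b; c]) && (#|U| == 2) =
                      (U \in [:: [set a; b]; [set a; c]; [set b; c]]).
Proof.
move=> nab nac nbc U; rewrite !inE; apply/idP/idP.
  case/andP=> /subsetP sub /cards2P [x [y [nxy UE]]]; subst U.
  have [xt yt] : x \in [set a; b; c] /\ y \in [set a; b; c].
    by split; apply: sub; rewrite !inE eqxx ?orbT.
  move: xt yt nxy; rewrite !inE.
  by do 2!case/orP=> [/orP[]|] /eqP->; rewrite ?eqxx //= => _;
    rewrite ?eqxx ?orbT // setUC eqxx ?orbT.
by case/or3P=> /eqP->; rewrite cards2 ?nab ?nac ?nbc andbT;
  apply/subsetP => z; rewrite !inE; case/orP=> ->; rewrite ?orbT.
Qed.

End Triples.

Section Graph.
Variables (T : finType) (e : rel T).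
Hypothesis e_sym : symmetric e.

Lemma cliqueP (s : {set T}) :
  reflect {in s &, forall x y, x != y -> e x y} (clique e s).
Proof.
apply: (iffP forall_inP) => [cl x y xs ys | cl x xs].
  by apply/implyP; move/forall_inP: (cl x xs); apply.
by apply/forall_inP => y ys; apply/implyP; apply: cl.
Qed.

Lemma no_edge_betweenP (s r : {set T}) :
  reflect {in s & r, forall x y, ~~ e x y} (no_edge_between e s r).
Proof.
apply: (iffP forall_inP) => [ne x y xs yr | ne x xs].
  by move/forall_inP: (ne x xs); apply.
by apply/forall_inP => y; apply: ne.
Qed.

Lemma is_edge2 (x y : T) : x != y -> is_edge e [set x; y] = e x y.
Proof.
move=> nxy; apply/existsP/idP => [[x' /andP [x'xy /existsP [y']]] | exy].
  case/and3P=> y'xy; move: x'xy y'xy; rewrite !inE.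
  by do 2!case/orP=> /eqP->; rewrite ?eqxx // e_sym.
exists x; rewrite !inE eqxx; apply/existsP; exists y.
by rewrite !inE eqxx orbT nxy.
Qed.

Lemma odd_triangle3 (a b c : T) : a != b -> a != c -> b != c ->
  odd_triangle e [set a; b; c] = odd (e a b + e a c + e b c).
Proof.
move=> nab nac nbc; rewrite /odd_triangle.
have -> : [set u in powerset [set a; b; c] | (#|u| == 2) && is_edge e u] =
          [set u in [:: [set a; b]; [set a; c]; [set b; c]] | is_edge e u].
  by apply/setP => u; rewrite !inE andbA pairs_of_triple // !inE.
have neq (U V : {set T}) z : z \notin U -> z \in V -> U != V.
  by move=> zU zV; apply: contraNneq zU => ->.
have [nba nca ncb] : [/\ b != a, c != a & c != b] by split; rewrite eq_sym.
have [n1 n2 n3] : [/\ [set a; b] != [set a; c], [set a; b] != [set b; c]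
                    & [set a; c] != [set b; c]].
  by split; [apply: (neq _ _ c) | apply: (neq _ _ c) | apply: (neq _ _ b)];
    rewrite !inE ?eqxx ?orbT // negb_or ?nca ?ncb ?nba ?nbc.
by rewrite card_setId_uniq /= ?is_edge2 ?addn0 ?addnA
  // !inE !negb_or n1 n2 n3.
Qed.

Lemma Z_faceP (t : {set T}) :
  Z_face e t <-> (forall a b c, a \in t -> b \in t -> c \in t ->
                    a != b -> a != c -> b != c -> odd (e a b + e a c + e b c)).
Proof.
split=> [/forall_inP odd3 a b c ta tb tc nab nac nbc | odd3].
  rewrite -odd_triangle3 //; apply: (implyP (odd3 _ _)).
    rewrite powersetE; apply/subsetP => z.
    by rewrite !inE => /orP[/orP[]|]/eqP->.
  by apply/cards3P; exists a, b, c.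
apply/forall_inP => u; rewrite powersetE => /subsetP ut; apply/implyP.
case/cards3P=> a [b [c [nab nac nbc uE]]]; rewrite uE odd_triangle3 //.
by apply: odd3 => //; apply: ut; rewrite uE !inE eqxx ?orbT.
Qed.

Definition separated (sg rh : {set T}) :=
  [/\ clique e sg, clique e rh, [disjoint sg & rh] & no_edge_between e sg rh].

Lemma separatedP (sg rh : {set T}) :
  separated sg rh <-> [disjoint sg & rh] /\
    {in sg :|: rh &, forall x y, x != y -> e x y = ((x \in sg) == (y \in sg))}.
Proof.
split=> [[/cliqueP sgC /cliqueP rhC d /no_edge_betweenP ne] | [d same]].
  split=> // x y; rewrite !inE => /orP[xs|xr] /orP[ys|yr] nxy.
  - by rewrite xs ys sgC.
  - by rewrite xs (disjointFl d yr); apply/negbTE/ne.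
  - by rewrite ys (disjointFl d xr) e_sym; apply/negbTE/ne.
  - by rewrite (disjointFl d xr) (disjointFl d yr) rhC.
split=> //.
- by apply/cliqueP => x y xs ys nxy; rewrite same ?inE ?xs ?ys.
- apply/cliqueP => x y xr yr nxy.
  by rewrite same ?inE ?xr ?yr ?orbT // (disjointFl d xr) (disjointFl d yr).
- apply/no_edge_betweenP => x y xs yr.
  have nxy : x != y by apply: contraTneq xs => ->; rewrite (disjointFl d yr).
  by rewrite same ?inE ?xs ?yr ?orbT // (disjointFl d yr).
Qed.

Lemma separated_sym (sg rh : {set T}) : separated sg rh -> separated rh sg.
Proof.
case=> sgC rhC d /no_edge_betweenP ne; split; rewrite 1?disjoint_sym //.
by apply/no_edge_betweenP => x y xr ys; rewrite e_sym; apply: ne.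
Qed.

Definition closed_nbhd (t : {set T}) (v : T) := [set u in t | (u == v) || e u v].

Lemma separated_closed_nbhd (sg rh : {set T}) v :
  separated sg rh -> v \in sg -> sg = closed_nbhd (sg :|: rh) v.
Proof.
move=> /separatedP [d same] vs; apply/setP => u; rewrite inE.
case: (boolP (u \in sg :|: rh)) => [ut | ];
  last by rewrite inE negb_or => /andP[/negbTE ->].
case: (eqVneq u v) => [-> | nuv] /=; first by rewrite vs.
by rewrite same // ?inE vs ?eqb_id.
Qed.

Lemma separated_cases (sg rh t : {set T}) v :
  separated sg rh -> sg :|: rh = t -> v \in t ->
  (sg, rh) = (closed_nbhd t v, t :\: closed_nbhd t v) \/
  (sg, rh) = (t :\: closed_nbhd t v, closed_nbhd t v).
Proof.
move=> sep tE; have /separatedP [d _] := sep.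
have rhE : rh = t :\: sg.
  by rewrite -tE setDUl setDv set0U; apply/esym/setDidPl; rewrite disjoint_sym.
have sgE : sg = t :\: rh by rewrite -tE setDUl setDv setU0; apply/esym/setDidPl.
rewrite -{1}tE inE => /orP[vs | vr].
  have := separated_closed_nbhd sep vs; rewrite tE => cE.
  by left; rewrite rhE -cE.
have := separated_closed_nbhd (separated_sym sep) vr; rewrite setUC tE => cE.
by right; rewrite sgE -cE.
Qed.

Lemma separated_unique (sg rh sg' rh' t : {set T}) :
  separated sg rh -> separated sg' rh' -> sg :|: rh = t -> sg' :|: rh' = t ->
  t != set0 -> (sg', rh') = (sg, rh) \/ (sg', rh') = (rh, sg).
Proof.
move=> sep sep' tE tE' /set0Pn [v vt].
have [] := separated_cases sep tE vt; have [] := separated_cases sep' tE' vt;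
  move=> [-> ->] [-> ->]; first [by left | by right].
Qed.

Lemma separated_Z_face (sg rh : {set T}) :
  separated sg rh -> Z_face e (sg :|: rh).
Proof.
move=> /separatedP [_ same]; apply/Z_faceP => a b c ta tb tc nab nac nbc.
by rewrite !same //; case: (a \in sg); case: (b \in sg); case: (c \in sg).
Qed.

Lemma Z_face_split (t : {set T}) :
  Z_face e t -> exists sg rh, separated sg rh /\ t = sg :|: rh.
Proof.
move=> /Z_faceP odd3; have [-> | [v vt]] := set_0Vmem t.
  exists set0, set0; split; last by rewrite setU0.
  by apply/separatedP; split=> [|x y]; rewrite ?inE // -setI_eq0 setI0.
pose c := closed_nbhd t v.
have tE : c :|: t :\: c = t.
  by apply/setP => u; rewrite !inE; case: (u \in t); rewrite /= ?andbT ?orbN.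
exists c, (t :\: c); split=> //; apply/separatedP; split.
  by rewrite disjoints_subset; apply/subsetP => u uc; rewrite inE in_setD uc.
rewrite tE => x y xt yt; rewrite !inE xt yt /=.
case: (eqVneq x v) => [-> | nxv]; case: (eqVneq y v) => [-> | nyv] /= nxy.
- by [].
- by rewrite e_sym.
- by case: (e x v).
have := odd3 x y v xt yt vt nxy nxv nyv.
by case: (e x y); case: (e x v); case: (e y v).
Qed.

Definition face_of (sg rh : {set T}) := tag_set sg false :|: tag_set rh true.

Lemma mem_face_of (sg rh : {set T}) v b :
  ((v, b) \in face_of sg rh) = (if b then v \in rh else v \in sg).
Proof. by rewrite !inE /=; case: b; rewrite ?andbT ?andbF ?orbF. Qed.

Lemma proj_face_of (sg rh : {set T}) : proj_set (face_of sg rh) = sg :|: rh.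
Proof.
apply/setP => v; rewrite inE; apply/imsetP/idP => [[[w b] wS ->] | ].
  by move: wS; rewrite mem_face_of; case: b => ->; rewrite ?orbT.
case/orP=> [vs | vr]; [exists (v, false) | exists (v, true)];
  by rewrite ?mem_face_of.
Qed.

Lemma swap_face_of (sg rh : {set T}) : swap_set (face_of sg rh) = face_of rh sg.
Proof.
apply/setP => [[v b]]; rewrite mem_face_of.
apply/imsetP/idP => [[[w c] wS [-> ->]] | vS].
  by move: wS; rewrite mem_face_of; case: c.
by exists (v, ~~ b); rewrite ?mem_face_of /swap_sign /= ?negbK //; case: b vS.
Qed.

Lemma Ztilde_faceP (S : {set T * bool}) :
  Ztilde_face e S <-> exists sg rh, separated sg rh /\ S = face_of sg rh.
Proof.
split=> [[sg [rh [sgC rhC d ne ->]]] | [sg [rh [[sgC rhC d ne] ->]]]];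
  by exists sg, rh.
Qed.

Lemma quotient_faceP (t : {set T}) : quotient_face e t <-> Z_face e t.
Proof.
split=> [[S [/Ztilde_faceP [sg [rh [sep ->]]] ->]] |
         /Z_face_split [sg [rh [sep ->]]]].
  by rewrite proj_face_of; apply: separated_Z_face.
exists (face_of sg rh); rewrite proj_face_of; split=> //.
by apply/Ztilde_faceP; exists sg, rh.
Qed.

Lemma Ztilde_face_swap (S : {set T * bool}) :
  Ztilde_face e S -> Ztilde_face e (swap_set S).
Proof.
move=> /Ztilde_faceP [sg [rh [sep ->]]]; apply/Ztilde_faceP.
by exists rh, sg; rewrite swap_face_of; split; first exact: separated_sym.
Qed.

Lemma Ztilde_face_inj_fst (S : {set T * bool}) :
  Ztilde_face e S -> {in S &, injective fst}.
Proof.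
move=> /Ztilde_faceP [sg [rh [[_ _ d _] ->]]] [v b] [w c].
rewrite !mem_face_of /= => vS wS vw; subst w.
case: b c vS wS => [] [] // => [vr vs | vs vr];
  by rewrite (disjointFl d vr) in vs.
Qed.

Lemma swap_set_neq (S : {set T * bool}) :
  {in S &, injective fst} -> S != set0 -> swap_set S != S.
Proof.
move=> inj /set0Pn [[v b] vS]; apply/eqP => swapS.
have vS' : (v, ~~ b) \in S by rewrite -swapS (imset_f (@swap_sign T) vS).
by have := inj _ _ vS vS' erefl; case: b {vS vS'}.
Qed.

Lemma Ztilde_face_over (S S' : {set T * bool}) :
  Ztilde_face e S -> Ztilde_face e S' -> proj_set S' = proj_set S ->
  S != set0 -> S' = S \/ S' = swap_set S.
Proof.
move=> /Ztilde_faceP [sg [rh [sep ->]]] /Ztilde_faceP [sg' [rh' [sep' ->]]].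
rewrite !proj_face_of swap_face_of => tE nz.
have nz' : sg :|: rh != set0 by rewrite -proj_face_of /proj_set imset_eq0.
by case: (separated_unique sep sep' erefl tE nz') => -[-> ->]; [left | right].
Qed.

End Graph.

Theorem theorem3p3 (T : finType) (e : rel T)
    (e_sym : symmetric e) (e_irr : irreflexive e) :
  (* the quotient of \tilde Z(G) by swap_sign equals Z(G) *)
  (forall t : {set T}, quotient_face e t <-> Z_face e t) /\
  (* double cover: swap_sign is free and preserves faces, the projection is
     injective on each face of \tilde Z(G), and the faces of \tilde Z(G)
     over a nonempty face proj S of Z(G) are exactly S and swap_sign S (distinct) *)
  (forall x : T * bool, swap_sign x != x) /\
  (forall S : {set T * bool}, Ztilde_face e S ->
     [/\ Ztilde_face e (swap_set S),
         {in S &, injective fst} &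
         (S != set0 ->
            swap_set S != S /\
            (forall S' : {set T * bool}, Ztilde_face e S' ->
               proj_set S' = proj_set S -> S' = S \/ S' = swap_set S))]).
Proof.
(* [e_irr] is unused: the definitions only look at [e] on distinct vertices. *)
split; first exact: (quotient_faceP e_sym).
split; first by case=> v []; rewrite /swap_sign xpair_eqE eqxx.
move=> S SZ; have inj := Ztilde_face_inj_fst SZ.
split=> [||nz]; [exact: (Ztilde_face_swap e_sym SZ) | exact: inj |].
split=> [|S' S'Z eqS]; first exact: swap_set_neq.
exact: (Ztilde_face_over e_sym SZ S'Z eqS nz).
Qed.
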